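(* Let $p$ be an odd prime, $q\in\mathbb{C}_p$ with $|1-q|_p<p^{-1/(p-1)}$, and let $\chi$ be a primitive Dirichlet character with conductor $p$. Then for every integer $n\ge0$, $$\frac{2}{[2]_q}E_{n,\chi,q}\equiv\sum_{a=0}^{p-1}\chi(a)(-1)^a[a]_q^n\pmod{[p]_q},$$ i.e. $\left|\frac{2}{[2]_q}E_{n,\chi,q}-\sum_{a=0}^{p-1}\chi(a)(-1)^a[a]_q^n\right|_p\le|[p]_q|_p$.
   Context: $\mathbb{C}_p$ is the completion of an algebraic closure of $\mathbb{Q}_p$, with absolute value $|\cdot|_p$ normalized by $|p|_p=1/p$. For $x\in\mathbb{Z}_p$ put $[x]_q=\frac{1-q^x}{1-q}$. For a Dirichlet character $\chi$ of odd conductor $d$, the generalized $q$-Euler numbers are $E_{n,\chi,q}=\frac{[2]_q}{2}\lim_{N\to\infty}\sum_{x=0}^{dp^N-1}\chi(x)(-1)^x[x]_q^n$; equivalently $\sum_{n\ge0}E_{n,\chi,q}\frac{t^n}{n!}=[2]_q\sum_{m\ge0}\chi(m)(-1)^m e^{[m]_qt}$. Here $d=p$. *)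

From Stdlib Require Import Reals.
From HB Require Import structures.
From mathcomp Require Import all_boot all_order all_algebra.
Set Implicit Arguments. Unset Strict Implicit. Unset Printing Implicit Defensive.
Import GRing.Theory.
Local Open Scope ring_scope.

Definition converges (K : fieldType) (abs : K -> R) (u : nat -> K) (l : K) : Prop :=
  forall eps : R, Rlt R0 eps ->
    exists N : nat, forall m : nat, (N <= m)%N -> Rlt (abs (u m - l)) eps.

Definition cauchy (K : fieldType) (abs : K -> R) (u : nat -> K) : Prop :=
  forall eps : R, Rlt R0 eps ->
    exists N : nat, forall m k : nat, (N <= m)%N -> (N <= k)%N ->
      Rlt (abs (u m - u k)) eps.

(* abs is a complete non-archimedean absolute value on K with |p| = 1/p.
   Such a (K, abs) is a complete valued extension of Q_p; C_p is one. *)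
Record padic_abs (p : nat) (K : fieldType) (abs : K -> R) : Prop := {
  abs_ge0 : forall x, Rle R0 (abs x);
  abs_eq0 : forall x, abs x = R0 <-> x = 0;
  abs_mul : forall x y, abs (x * y) = Rmult (abs x) (abs y);
  abs_ultra : forall x y, Rle (abs (x + y)) (Rmax (abs x) (abs y));
  abs_p : abs (p%:R) = Rinv (INR p);
  abs_complete : forall u, cauchy abs u -> exists l, converges abs u l
}.

(* q-number [a]_q = (1 - q^a)/(1 - q) for a natural number a, written as
   1 + q + ... + q^(a-1) (which also covers q = 1). *)
Definition qint (K : fieldType) (q : K) (a : nat) : K := \sum_(i < a) q ^+ i.

Definition dirichlet_char (d : nat) (K : fieldType) (chi : nat -> K) : Prop :=
  [/\ chi 1%N = 1,
      forall m n : nat, chi (m * n)%N = chi m * chi n,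
      forall n : nat, chi (n + d)%N = chi n &
      forall n : nat, chi n = 0 <-> ~~ coprime n d].

Definition primitive_char (d : nat) (K : fieldType) (chi : nat -> K) : Prop :=
  dirichlet_char d chi /\
  forall d' : nat, (d' %| d)%N -> (d' < d)%N ->
    ~ (exists psi : nat -> K, dirichlet_char d' psi /\
         forall n : nat, coprime n d -> chi n = psi n).

Definition qEuler_partial (d : nat) (K : fieldType) (chi : nat -> K) (q : K)
    (n N : nat) : K :=
  \sum_(x < d * d ^ N) chi x * (-1) ^+ x * qint q x ^+ n.

Definition is_qEuler (d : nat) (K : fieldType) (abs : K -> R) (chi : nat -> K)
    (q : K) (n : nat) (E : K) : Prop :=
  exists L : K, converges abs (fun N => qEuler_partial d chi q n N) L /\
                E = qint q 2 / 2 * L.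

From Stdlib Require Import Reals Lra Psatz.
From HB Require Import structures.
From mathcomp Require Import all_boot all_order all_algebra cyclic.
Import GRing.Theory.
Local Open Scope ring_scope.
Set Implicit Arguments. Unset Strict Implicit.

(* Write T_M = sum_{x<M} chi(x) (-1)^x [x]_q^n, so that the defining partial
   sums are u_N = T_{p^(N+1)} and the right-hand sum of the theorem is u_0.
   The heart of the proof is the block congruence
       |T_{pM} - T_M| <= |[M]_q|     for odd M divisible by p,
   obtained by cutting [0, pM) into p blocks of length M: on the y-th block
   chi is unchanged, the sign picks up (-1)^y, and [yM + a]_q differs from
   [a]_q by a multiple of [M]_q; the signs (-1)^y over y < p sum to 1.
   Since |[p^N]_q| <= max(|p|, |1 - q|)^N and max(|p|, |1 - q|) < 1, the
   partial sums are Cauchy, hence converge to some L in the complete field;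
   every increment is also bounded by |[p]_q|, so the ultrametric inequality
   gives |L - u_0| <= |[p]_q|.  Finally [2]_q = 1 + q and 2 are nonzero, so
   E := [2]_q/2 * L satisfies 2/[2]_q * E = L. *)

Lemma qintS (K : fieldType) (q : K) k : qint q k.+1 = qint q k + q ^+ k.
Proof. by rewrite /qint big_ord_recr. Qed.

Lemma qint2 (K : fieldType) (q : K) : qint q 2 = 1 + q.
Proof. by rewrite /qint !big_ord_recr big_ord0 /= add0r expr0 expr1. Qed.

Lemma qint_add (K : fieldType) (q : K) m k :
  qint q (m + k)%N = qint q m + q ^+ m * qint q k.
Proof.
elim: k => [|k IH]; first by rewrite addn0 /qint big_ord0 mulr0 addr0.
by rewrite addnS !qintS IH mulrDr exprD addrA.
Qed.

Lemma qint_mul (K : fieldType) (q : K) M y :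
  qint q (M * y)%N = qint q M * qint (q ^+ M) y.
Proof.
elim: y => [|y IH]; first by rewrite muln0 /qint !big_ord0 mulr0.
by rewrite mulnSr qint_add IH qintS mulrDr exprM; congr (_ + _); rewrite mulrC.
Qed.

Lemma one_sub_exp (K : fieldType) (q : K) m : 1 - q ^+ m = (1 - q) * qint q m.
Proof.
elim: m => [|m IH]; first by rewrite expr0 subrr /qint big_ord0 mulr0.
by rewrite qintS mulrDr -IH mulrBl mul1r exprS addrA subrK.
Qed.

Lemma sum_ord_blocks (V : nmodType) (g : nat -> V) M k :
  \sum_(x < k * M) g x = \sum_(y < k) \sum_(a < M) g (y * M + a)%N.
Proof.
elim: k => [|k IH]; first by rewrite mul0n !big_ord0.
by rewrite mulSnr big_split_ord /= IH big_ord_recr.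
Qed.

Lemma sum_sign_odd (V : pzRingType) m :
  odd m -> \sum_(y < m) ((-1) ^+ y : V) = 1.
Proof.
move=> om; rewrite -(odd_double_half m) om add1n.
elim: (m./2) => [|k IH]; first by rewrite big_ord1 expr0.
rewrite doubleS big_ord_recr /= big_ord_recr /= IH.
have e : (-1) ^+ (k.*2) = 1 :> V by rewrite -signr_odd odd_double.
by rewrite !exprS e !mulr1 mulrN1 opprK subrK.
Qed.

Section DirichletCharacter.
Variables (d : nat) (K : fieldType) (chi : nat -> K).
Hypothesis Hchi : dirichlet_char d chi.

Lemma chi_periodic n k : chi (n + k * d)%N = chi n.
Proof.
case: Hchi => _ _ hper _; elim: k => [|k IH]; first by rewrite mul0n addn0.
by rewrite mulSnr addnA hper IH.
Qed.

(* chi(a)^phi(d) = chi(a^phi(d)) = chi(1) = 1 for a prime to d (Euler). *)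
Lemma chi_exp_totient a : (1 < d)%N -> coprime a d -> chi a ^+ totient d = 1.
Proof.
move=> d1 cop; case: Hchi => chi1 hmul _ _.
have chi_exp k : chi (a ^ k)%N = chi a ^+ k.
  by elim: k => [|k IH]; rewrite ?expn0 ?expr0 ?chi1 // expnS hmul IH exprS.
rewrite -chi_exp (divn_eq (a ^ totient d) d) addnC chi_periodic.
by rewrite (Euler_exp_totient cop) modn_small.
Qed.

End DirichletCharacter.

Section UltrametricAbs.
Variables (p : nat) (K : fieldType) (abs : K -> R).
Hypothesis Habs : padic_abs p abs.

Lemma abs0 : abs 0 = R0.
Proof. exact/(abs_eq0 Habs). Qed.

Lemma abs1 : abs 1 = R1.
Proof.
have h := abs_mul Habs 1 1; rewrite mulr1 in h.
have h0 : abs 1 <> R0 by move/(abs_eq0 Habs)/eqP; rewrite oner_eq0.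
have := abs_ge0 Habs 1; nra.
Qed.

Lemma absN x : abs (- x) = abs x.
Proof.
have hN1 : abs (-1) = R1.
  have h := abs_mul Habs (-1) (-1); rewrite mulrNN mulr1 abs1 in h.
  have := abs_ge0 Habs (-1); nra.
by rewrite -mulN1r (abs_mul Habs) hN1 Rmult_1_l.
Qed.

Lemma abs_subC x y : abs (x - y) = abs (y - x).
Proof. by rewrite -opprB absN. Qed.

Lemma abs_add_le x y r : Rle (abs x) r -> Rle (abs y) r -> Rle (abs (x + y)) r.
Proof. by move=> hx hy; apply: Rle_trans (abs_ultra Habs x y) _; apply: Rmax_lub. Qed.

Lemma abs_sub_le x y r : Rle (abs x) r -> Rle (abs y) r -> Rle (abs (x - y)) r.
Proof. by move=> hx hy; apply: abs_add_le; rewrite ?absN. Qed.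

Lemma abs_sum_le m (F : 'I_m -> K) r :
  Rle R0 r -> (forall i, Rle (abs (F i)) r) -> Rle (abs (\sum_(i < m) F i)) r.
Proof.
move=> r0 hF; apply: (big_ind (fun x => Rle (abs x) r)) => //.
- by rewrite abs0.
- by move=> x y; apply: abs_add_le.
Qed.

Lemma abs_mul_le x y r : Rle (abs x) R1 -> Rle (abs y) r -> Rle (abs (x * y)) r.
Proof.
move=> hx hy; rewrite (abs_mul Habs).
have := abs_ge0 Habs x; have := abs_ge0 Habs y; nra.
Qed.

Lemma abs_exp x n : abs (x ^+ n) = pow (abs x) n.
Proof. by elim: n => [|n IH]; rewrite ?expr0 ?abs1 // exprS (abs_mul Habs) IH. Qed.

Lemma abs_exp_le1 x n : Rle (abs x) R1 -> Rle (abs (x ^+ n)) R1.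
Proof.
move=> hx; elim: n => [|n IH]; first by rewrite expr0 abs1; lra.
by rewrite exprS; apply: abs_mul_le.
Qed.

Lemma abs_sign_le1 n : Rle (abs ((-1) ^+ n)) R1.
Proof. by apply: abs_exp_le1; rewrite absN abs1; lra. Qed.

Lemma abs_nat_le1 n : Rle (abs (n%:R)) R1.
Proof.
elim: n => [|n IH]; first by rewrite abs0; lra.
rewrite -addn1 natrD; apply: abs_add_le => //; rewrite abs1; lra.
Qed.

Lemma abs_powdiff X Y n : Rle (abs X) R1 -> Rle (abs Y) R1 ->
  Rle (abs (X ^+ n - Y ^+ n)) (abs (X - Y)).
Proof.
move=> hX hY; elim: n => [|n IH].
  by rewrite !expr0 subrr abs0; exact: (abs_ge0 Habs).
have -> : X ^+ n.+1 - Y ^+ n.+1 = X * (X ^+ n - Y ^+ n) + Y ^+ n * (X - Y).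
  by rewrite !exprS !mulrBr [Y ^+ n * X]mulrC [Y ^+ n * Y]mulrC addrA subrK.
apply: abs_add_le; apply: abs_mul_le => //; first exact: abs_exp_le1.
exact: Rle_refl.
Qed.

Lemma abs_p_lt1 : (1 < p)%N -> Rlt (abs (p%:R)) R1.
Proof.
move=> p1; rewrite (abs_p Habs).
have hp : Rlt R1 (INR p) by apply: (lt_INR 1 p); apply/ltP.
apply: (Rmult_lt_reg_l (INR p)); first lra.
rewrite Rinv_r; lra.
Qed.

(* For odd p, 2 is a unit: 1 = p - 2 (p-1)/2 forces |2| >= 1. *)
Lemma abs2_ge1 : (1 < p)%N -> odd p -> Rle R1 (abs (2 : K)).
Proof.
move=> p1 op.
have e : (1 : K) = p%:R - 2 * (p./2)%:R.
  have hp : p = (p./2).*2.+1 by rewrite -{1}(odd_double_half p) op add1n.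
  set k := p./2 in hp *.
  by rewrite hp -addn1 -addnn !natrD mulrDl mul1r [_ + 1]addrC addrK.
have h2 : Rle (abs (2 * (p./2)%:R : K)) (abs (2 : K)).
  by rewrite mulrC; apply: abs_mul_le; [apply: abs_nat_le1 | apply: Rle_refl].
have := abs_ultra Habs (p%:R) (- (2 * (p./2)%:R)).
rewrite -e abs1 absN; have := abs_p_lt1 p1.
rewrite /Rmax; case: Rle_dec => _ hp1 h.
- exact: Rle_trans h h2.
- lra.
Qed.

Lemma converges_ball (u : nat -> K) L a r : converges abs u L ->
  (forall N, Rle (abs (u N - a)) r) -> Rle (abs (L - a)) r.
Proof.
move=> hL hu; case: (Rle_lt_dec (abs (L - a)) r) => // hr.
have r0 : Rle R0 r := Rle_trans _ _ _ (abs_ge0 Habs _) (hu 0%N).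
have [N hN] := hL _ (Rle_lt_trans _ _ _ r0 hr).
have hLN := hN N (leqnn N); rewrite abs_subC in hLN.
have := abs_ultra Habs (L - u N) (u N - a); rewrite addrA subrK => h.
have := Rmax_lub_lt _ _ _ hLN (Rle_lt_trans _ _ _ (hu N) hr) => hmax.
by case: (Rlt_irrefl _ (Rle_lt_trans _ _ _ h hmax)).
Qed.

Lemma abs_telescope (u : nat -> K) m r : Rle R0 r ->
  (forall N, (m <= N)%N -> Rle (abs (u N.+1 - u N)) r) ->
  forall k, Rle (abs (u (m + k)%N - u m)) r.
Proof.
move=> r0 hu; elim=> [|k IH]; first by rewrite addn0 subrr abs0.
rewrite addnS -(subrK (u (m + k)%N) (u _)) -addrA.
by apply: abs_add_le => //; apply: hu; apply: leq_addr.
Qed.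

Lemma cauchy_geometric (u : nat -> K) c : Rle R0 c -> Rlt c R1 ->
  (forall N, Rle (abs (u N.+1 - u N)) (pow c N)) -> cauchy abs u.
Proof.
move=> c0 c1 hu eps eps0.
have [N0 hN0] := pow_lt_1_zero c ltac:(rewrite Rabs_pos_eq //) eps eps0.
have hcN0 : Rlt (pow c N0) eps.
  by have := hN0 N0 (le_n N0); rewrite Rabs_pos_eq //; apply: pow_le.
have hball j : (N0 <= j)%N -> Rle (abs (u j - u N0)) (pow c N0).
  move=> hj; rewrite -(subnKC hj); apply: abs_telescope; first exact: pow_le.
  move=> N hN; apply: Rle_trans (hu N) _.
  rewrite -(subnKC hN) pow_add.
  have hle1 : Rle (pow c (N - N0)) R1.
    apply: Rle_trans (Req_le _ _ (pow1 _)).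
    exact: pow_incr (conj c0 (Rlt_le _ _ c1)).
  have := pow_le c N0 c0; nra.
exists N0 => m k hm hk.
have -> : u m - u k = (u m - u N0) - (u k - u N0) by rewrite opprB addrA subrK.
exact: Rle_lt_trans (abs_sub_le (hball m hm) (hball k hk)) hcN0.
Qed.

(* Nonzero values of a Dirichlet character are roots of unity. *)
Lemma abs_chi_le1 d (chi : nat -> K) a : (1 < d)%N -> dirichlet_char d chi ->
  Rle (abs (chi a)) R1.
Proof.
move=> d1 hchi; have [cop | ncop] := boolP (coprime a d); last first.
  by have [_ _ _ hz] := hchi; rewrite (proj2 (hz a) ncop) abs0; lra.
have tpos : (0 < totient d)%coq_nat by apply/ltP; rewrite totient_gt0 ltnW.
have e : pow (abs (chi a)) (totient d) = R1.
  by rewrite -abs_exp chi_exp_totient ?abs1.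
case: (Rle_lt_dec (abs (chi a)) R1) => // hlt.
by have := Rlt_pow_R1 _ _ hlt tpos; lra.
Qed.

Lemma abs_qint_le1 Q k : Rle (abs Q) R1 -> Rle (abs (qint Q k)) R1.
Proof. by move=> hQ; apply: abs_sum_le => [|i]; [lra | apply: abs_exp_le1]. Qed.

Lemma abs_one_sub_exp Q m :
  Rle (abs Q) R1 -> Rle (abs (1 - Q ^+ m)) (abs (1 - Q)).
Proof.
move=> hQ; rewrite one_sub_exp mulrC.
by apply: abs_mul_le; [apply: abs_qint_le1 | apply: Rle_refl].
Qed.

Lemma abs_le1_near1 x : Rlt (abs (1 - x)) R1 -> Rle (abs x) R1.
Proof.
move=> hx; have -> : x = 1 - (1 - x) by rewrite opprB addrC subrK.
by apply: abs_sub_le; [rewrite abs1; apply: Rle_refl | apply: Rlt_le].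
Qed.

(* [p]_Q = p + sum_(i<p) (Q^i - 1), and each Q^i - 1 is a multiple of 1 - Q. *)
Lemma abs_qint_p Q : Rle (abs Q) R1 ->
  Rle (abs (qint Q p)) (Rmax (abs (p%:R)) (abs (1 - Q))).
Proof.
move=> hQ; have -> : qint Q p = p%:R + \sum_(i < p) (Q ^+ i - 1).
  by rewrite sumrB sumr_const card_ord addrC subrK.
apply: abs_add_le; first exact: Rmax_l.
apply: abs_sum_le => [|i]; first exact: Rle_trans (abs_ge0 Habs _) (Rmax_l _ _).
by rewrite abs_subC; apply: Rle_trans (Rmax_r _ _); apply: abs_one_sub_exp.
Qed.

(* Iterating [p^(N+1)]_q = [p^N]_q [p]_(q^(p^N)) gives
   |[p^N]_q| <= max(|p|, |1 - q|)^N. *)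
Lemma abs_qint_ppow q N : Rle (abs q) R1 ->
  Rle (abs (qint q (p ^ N)%N)) (pow (Rmax (abs (p%:R)) (abs (1 - q))) N).
Proof.
move=> hq; elim: N => [|N IH].
  by rewrite expn0 /qint big_ord1 expr0 abs1 /=; lra.
rewrite expnSr qint_mul (abs_mul Habs) /=.
have hp : Rle (abs (qint (q ^+ (p ^ N)%N) p)) (Rmax (abs (p%:R)) (abs (1 - q))).
  apply: Rle_trans (abs_qint_p (abs_exp_le1 _ hq)) _.
  exact/Rle_max_compat_l/abs_one_sub_exp.
have := abs_ge0 Habs (qint q (p ^ N)%N).
have := abs_ge0 Habs (qint (q ^+ (p ^ N)%N) p); nra.
Qed.

(* [yM + a]_q - [a]_q = q^a [M]_q [y]_(q^M) is a multiple of [M]_q. *)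
Lemma abs_qint_shift q M y a : Rle (abs q) R1 ->
  Rle (abs (qint q (y * M + a)%N - qint q a)) (abs (qint q M)).
Proof.
move=> hq; rewrite addnC qint_add mulnC qint_mul addrC addKr mulrCA mulrC.
apply: abs_mul_le; last exact: Rle_refl.
by apply: abs_mul_le; [apply: abs_exp_le1 | apply/abs_qint_le1/abs_exp_le1].
Qed.

(* Near 1 (|1 - q| < 1), [2]_q = 1 + q is nonzero since 2 is a unit. *)
Lemma qint2_neq0 q : (1 < p)%N -> odd p -> Rlt (abs (1 - q)) R1 -> qint q 2 != 0.
Proof.
move=> p1 op hq; rewrite qint2; apply/eqP => hq2.
have q_eqN1 : q = -1 by apply/eqP; rewrite -addr_eq0 addrC hq2.
have e2 : 1 - q = 2 by rewrite q_eqN1 opprK.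
have h2 := abs2_ge1 p1 op; rewrite e2 in hq.
exact: Rlt_irrefl _ (Rle_lt_trans _ _ _ h2 hq).
Qed.

End UltrametricAbs.

Section QEulerSums.
Variables (p : nat) (K : fieldType) (abs : K -> R).
Variables (chi : nat -> K) (q : K) (n : nat).
Hypotheses (Habs : padic_abs p abs) (Hprime : prime p) (Hodd : odd p)
  (Hchi : dirichlet_char p chi) (Hq : Rle (abs q) R1).

Definition qEuler_sum (M : nat) : K :=
  \sum_(x < M) chi x * (-1) ^+ x * qint q x ^+ n.

Lemma qEuler_sum_block M : (p %| M)%N -> odd M ->
  Rle (abs (qEuler_sum (p * M) - qEuler_sum M)) (abs (qint q M)).
Proof.
move=> dvd_pM oM; rewrite /qEuler_sum.
rewrite (sum_ord_blocks (fun x => chi x * (-1) ^+ x * qint q x ^+ n)).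
set T := \sum_(x < M) _.
have -> : T = \sum_(y < p) (-1) ^+ y * T by rewrite -mulr_suml sum_sign_odd ?mul1r.
rewrite -sumrB; apply: (abs_sum_le Habs); first exact: (abs_ge0 Habs).
move=> y; rewrite /T mulr_sumr -sumrB.
apply: (abs_sum_le Habs); first exact: (abs_ge0 Habs).
move=> a.
have chi_block : chi (y * M + a)%N = chi a.
  have -> : (y * M = y * (M %/ p) * p)%N by rewrite -mulnA divnK.
  by rewrite addnC chi_periodic.
have sign_block : (-1) ^+ (y * M + a)%N = (-1) ^+ y * (-1) ^+ a :> K.
  by rewrite exprD -signr_odd oddM oM andbT signr_odd.
rewrite chi_block sign_block.
have -> : chi a * ((-1) ^+ y * (-1) ^+ a) * qint q (y * M + a) ^+ n
    - (-1) ^+ y * (chi a * (-1) ^+ a * qint q a ^+ n)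
    = (-1) ^+ y * (chi a * (-1) ^+ a)
      * (qint q (y * M + a) ^+ n - qint q a ^+ n).
  by rewrite mulrBr !mulrA [chi a * _]mulrC.
apply: (abs_mul_le Habs).
  apply: (abs_mul_le Habs); first exact: (abs_sign_le1 Habs).
  apply: (abs_mul_le Habs); last exact: (abs_sign_le1 Habs).
  exact: (abs_chi_le1 Habs _ (prime_gt1 Hprime) Hchi).
apply: Rle_trans (abs_qint_shift Habs _ _ _ Hq).
by apply: (abs_powdiff Habs); apply: (abs_qint_le1 Habs).
Qed.

(* Consecutive partial sums: u_(N+1) - u_N = T_(p p^(N+1)) - T_(p^(N+1)). *)
Lemma qEuler_partial_step N :
  Rle (abs (qEuler_partial p chi q n N.+1 - qEuler_partial p chi q n N))
      (abs (qint q (p ^ N.+1)%N)).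
Proof.
have oM : odd (p * p ^ N)%N by rewrite oddM oddX Hodd orbT.
have := qEuler_sum_block (dvdn_mulr _ (dvdnn p)) oM.
by rewrite /qEuler_partial -!expnS => block; exact: block.
Qed.

Lemma qEuler_partial_limit : Rlt (abs (1 - q)) R1 ->
  exists L, converges abs (qEuler_partial p chi q n) L /\
    Rle (abs (L - qEuler_partial p chi q n 0)) (abs (qint q p)).
Proof.
move=> h1q; set u := qEuler_partial p chi q n.
set c := Rmax (abs (p%:R : K)) (abs (1 - q)).
have c0 : Rle R0 c := Rle_trans _ _ _ (abs_ge0 Habs _) (Rmax_l _ _).
have c1 : Rlt c R1.
  by apply: Rmax_lub_lt => //; exact: (abs_p_lt1 Habs (prime_gt1 Hprime)).
have geometric N : Rle (abs (u N.+1 - u N)) (pow c N).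
  apply: Rle_trans (qEuler_partial_step N) _.
  apply: Rle_trans (abs_qint_ppow Habs _ Hq) _; rewrite /= -/c.
  have := pow_le c N c0; nra.
have within_p N : (0 <= N)%N -> Rle (abs (u N.+1 - u N)) (abs (qint q p)).
  move=> _; apply: Rle_trans (qEuler_partial_step N) _.
  rewrite expnS qint_mul (abs_mul Habs).
  have := abs_qint_le1 Habs (p ^ N)%N (abs_exp_le1 Habs p Hq).
  have := abs_ge0 Habs (qint q p).
  have := abs_ge0 Habs (qint (q ^+ p) (p ^ N)%N); nra.
have [L hL] := abs_complete Habs (cauchy_geometric Habs c0 c1 geometric).
exists L; split => //; apply: (converges_ball Habs hL) => N.
exact: (abs_telescope Habs (abs_ge0 Habs _) within_p N).
Qed.

End QEulerSums.

Lemma Rpower_neg_inv_lt1 p :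
  (1 < p)%N -> Rlt (Rpower (INR p) (Ropp (Rinv (INR (p - 1))))) R1.
Proof.
move=> p1; have hp : Rlt R1 (INR p) by apply: (lt_INR 1 p); apply/ltP.
have h0 : Rlt R0 (INR (p - 1)) by apply: lt_0_INR; apply/ltP; rewrite subn_gt0.
have := Rpower_lt (INR p) _ R0 hp (Ropp_lt_gt_0_contravar _ (Rinv_0_lt_compat _ h0)).
rewrite Rpower_O; lra.
Qed.

Theorem mainTheorem5 (p : nat) (K : fieldType) (abs : K -> R) (q : K)
    (chi : nat -> K) :
  prime p -> odd p -> padic_abs p abs ->
  Rlt (abs (1 - q)) (Rpower (INR p) (Ropp (Rinv (INR (p - 1))))) ->
  primitive_char p chi ->
  forall n : nat, exists E : K, is_qEuler p abs chi q n E /\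
    Rle (abs (2 / qint q 2 * E
              - \sum_(a < p) chi a * (-1) ^+ a * qint q a ^+ n))
        (abs (qint q p)).
Proof.
move=> pp op Habs h1q [Hchi _] n.
have p1 := prime_gt1 pp.
have h1q1 : Rlt (abs (1 - q)) R1 := Rlt_trans _ _ _ h1q (Rpower_neg_inv_lt1 p1).
have hq := abs_le1_near1 Habs h1q1.
have [L [hL hL0]] := qEuler_partial_limit n Habs pp op Hchi hq h1q1.
have h2 : (2 : K) != 0.
  by apply/eqP => e2; have := abs2_ge1 Habs p1 op; rewrite e2 (abs0 Habs); lra.
exists (qint q 2 / 2 * L); split; first by exists L.
have hQ2 := qint2_neq0 Habs p1 op h1q1.
rewrite !mulrA divfK // divff // mul1r.
by move: hL0; rewrite /qEuler_partial expn0 muln1.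
Qed.
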